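(* Let $\mathbf{x}=(\mathbf{x}_1,\dots,\mathbf{x}_n)$ and $\mathbf{y}=(\mathbf{y}_1,\dots,\mathbf{y}_n)$ be Generalized Nash equilibria of $G^{(2)}$ such that $\mathbf{x}_T^{(j)}\le\mathbf{y}_T^{(j)}$ for all $j\in[m]$. Then: (1) if $i\in\mathcal{T}_I(\mathbf{x})$, then $J_{\mathbf{y}_{-i}}\subset J_{\mathbf{x}_{-i}}$; (2) $\mathcal{T}_I(\mathbf{x})\subset\mathcal{T}_I(\mathbf{y})$.
   Context: $G^{(2)}$ is a Fragile multi-CPR Game: $n,m\ge1$, $[k]=\{1,\dots,k\}$, $C_m=\{(x_1,\dots,x_m)\in[0,1]^m:\sum_j x_j\le1\}$, $\mathcal{C}_n=\prod_{i\in[n]}C_m$, $\mathcal{C}_{-i}=\prod_{[n]\setminus\{i\}}C_m$. A profile is $\mathbf{x}=(\mathbf{x}_1,\dots,\mathbf{x}_n)$, $\mathbf{x}_i=(x_{i1},\dots,x_{im})$; write $\mathbf{x}=(\mathbf{x}_i,\mathbf{x}_{-i})$; $\mathbf{x}_T^{(j)}=\sum_i x_{ij}$, $\mathbf{x}_T^{j|i}=\sum_{\ell\ne i}x_{\ell j}$ (similarly for $\mathbf{y}$). Each CPR $j$ has return rate $\mathcal{R}_j(t)>1$ and failure probability $p_j(t)\in[0,1]$; each player $i$ has parameters $a_i,k_i$. $\mathcal{F}_{ij}(t)=(\mathcal{R}_j(t)-1)^{a_i}(1-p_j(t))-k_ip_j(t)$; utility $\mathcal{V}_i(\mathbf{x}_i;\mathbf{x}_{-i})=\sum_j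 x_{ij}^{a_i}\mathcal{F}_{ij}(\mathbf{x}_T^{(j)})$. Assumption: (1) $p_j(0)=0$, $p_j(t)=1$ for $t\ge1$; (2) $a_i\in(0,1]$, $k_i>0$; (3) each $\mathcal{F}_{ij}$ (continuous on $[0,1]$) has strictly negative first and second derivatives on $(0,1)$. $\omega_{ij}\in(0,1)$ is the unique zero of $\mathcal{F}_{ij}$ in $(0,1)$. $A(\mathbf{x}_{-i})=\{j:\mathbf{x}_T^{j|i}<\omega_{ij}\}$. $\vartheta_i(\mathbf{x}_{-i})=C_m\cap\big(\prod_{j\in A(\mathbf{x}_{-i})}[0,\omega_{ij}-\mathbf{x}_T^{j|i}]\times\prod_{j\notin A(\mathbf{x}_{-i})}\{0\}\big)$. A Generalized Nash equilibrium is $\mathbf{x}\in\mathcal{C}_n$ with, for all $i$, $\mathbf{x}_i\in\vartheta_i(\mathbf{x}_{-i})$ and $\mathcal{V}_i(\mathbf{x}_i;\mathbf{x}_{-i})\ge\mathcal{V}_i(\mathbf{z};\mathbf{x}_{-i})$ for all $\mathbf{z}\in\vartheta_i(\mathbf{x}_{-i})$. $\psi_{ij}(x;s)=x\,\mathcal{F}_{ij}'(x+s)+a_i\mathcal{F}_{ij}(x+s)$. For a GNE $\mathbf{x}$: $J_{\mathbf{x}_{-i}}=\{j\in A(\mathbf{x}_{-i}):x_{ij}\ne0\}$; $\mathbf{x}_i$ is of Type I if $\sum_{j\in J_{\mathbf{x}_{-i}}}x_{ij}<1$ and $\psi_{ij}(x_{ij};\mathbf{x}_T^{j|i})=0$ for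 all $j\in J_{\mathbf{x}_{-i}}$; of Type II if $\sum_{j\in J_{\mathbf{x}_{-i}}}x_{ij}=1$ and there is $\kappa_0\ge0$ with $x_{ij}^{a_i-1}\psi_{ij}(x_{ij};\mathbf{x}_T^{j|i})=\kappa_0$ for all $j\in J_{\mathbf{x}_{-i}}$. $\mathcal{T}_I(\mathbf{x})=\{i\in[n]:\mathbf{x}_i\text{ is of Type I}\}$. *)

From HB Require Import structures.
From mathcomp Require Import all_boot all_order all_algebra.
From mathcomp Require Import all_classical all_reals all_analysis.
Set Implicit Arguments. Unset Strict Implicit. Unset Printing Implicit Defensive.
Import Order.TTheory GRing.Theory Num.Theory.
Import numFieldNormedType.Exports.
Local Open Scope classical_set_scope.
Local Open Scope ring_scope.

Record game (R : realType) (n m : nat) := Game {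
  Rrate : 'I_m -> R -> R;
  pfail : 'I_m -> R -> R;
  aexp  : 'I_n -> R;
  kpar  : 'I_n -> R;
  omega : 'I_n -> 'I_m -> R    (* omega_ij, the zero of F_ij in (0,1) *)
}.

Section Defs.
Variables (R : realType) (n m : nat) (G : game R n m).

Definition Ffun (i : 'I_n) (j : 'I_m) (t : R) : R :=
  (Rrate G j t - 1) `^ (aexp G i) * (1 - pfail G j t) - kpar G i * pfail G j t.

(* Standing assumptions of the paper, plus: omega_ij is a zero of F_ij in (0,1)
   (it is then the unique one, by strict monotonicity). *)
Definition game_assumptions : Prop :=
  (0 < n)%N /\ (0 < m)%N /\
  (forall j t, 0 <= t -> 1 < Rrate G j t) /\
  (forall j t, 0 <= t -> 0 <= pfail G j t <= 1) /\
  (forall j, pfail G j 0 = 0) /\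
  (forall j t, 1 <= t -> pfail G j t = 1) /\
  (forall i, 0 < aexp G i <= 1) /\
  (forall i, 0 < kpar G i) /\
  (forall i j, {within `[0, 1], continuous (Ffun i j)}) /\
  (forall i j t, 0 < t < 1 ->
      derivable (Ffun i j) t 1 /\ derive1 (Ffun i j) t < 0 /\
      derivable (derive1 (Ffun i j)) t 1 /\ derive1 (derive1 (Ffun i j)) t < 0) /\
  (forall i j, 0 < omega G i j < 1 /\ Ffun i j (omega G i j) = 0).

Definition profile := 'I_n -> 'I_m -> R.

Definition inCm (z : 'I_m -> R) : Prop :=
  (forall j, 0 <= z j <= 1) /\ \sum_(j < m) z j <= 1.

Definition inCn (x : profile) : Prop := forall i, inCm (x i).

Definition xT (x : profile) (j : 'I_m) : R := \sum_(i < n) x i j.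
Definition xTm (x : profile) (i : 'I_n) (j : 'I_m) : R :=
  \sum_(l < n | l != i) x l j.

Definition Vutil (i : 'I_n) (z : 'I_m -> R) (x : profile) : R :=
  \sum_(j < m) z j `^ (aexp G i) * Ffun i j (z j + xTm x i j).

Definition Aset (x : profile) (i : 'I_n) (j : 'I_m) : bool :=
  xTm x i j < omega G i j.

Definition vartheta (x : profile) (i : 'I_n) (z : 'I_m -> R) : Prop :=
  inCm z /\
  forall j, (Aset x i j -> 0 <= z j <= omega G i j - xTm x i j) /\
            (~~ Aset x i j -> z j = 0).

Definition GNE (x : profile) : Prop :=
  inCn x /\
  forall i, vartheta x i (x i) /\
    forall z, vartheta x i z -> Vutil i z x <= Vutil i (x i) x.

Definition psi (i : 'I_n) (j : 'I_m) (x s : R) : R :=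
  x * derive1 (Ffun i j) (x + s) + aexp G i * Ffun i j (x + s).

Definition Jset (x : profile) (i : 'I_n) (j : 'I_m) : bool :=
  Aset x i j && (x i j != 0).

Definition typeI (x : profile) (i : 'I_n) : Prop :=
  \sum_(j < m | Jset x i j) x i j < 1 /\
  forall j, Jset x i j -> psi i j (x i j) (xTm x i j) = 0.

Definition typeII (x : profile) (i : 'I_n) : Prop :=
  \sum_(j < m | Jset x i j) x i j = 1 /\
  exists kappa0 : R, 0 <= kappa0 /\
    forall j, Jset x i j ->
      x i j `^ (aexp G i - 1) * psi i j (x i j) (xTm x i j) = kappa0.

Definition TI (x : profile) : set 'I_n := [set i | typeI x i].

End Defs.

From HB Require Import structures.
From mathcomp Require Import all_boot all_order all_algebra.
From mathcomp Require Import all_classical all_reals all_analysis.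
From mathcomp Require Import ring lra.
Import Order.TTheory GRing.Theory Num.Theory.
Import numFieldNormedType.Exports.
Set Implicit Arguments.
Unset Strict Implicit.
Local Open Scope classical_set_scope.
Local Open Scope ring_scope.

(* Let s be the load the other players put on CPR j.  Player i's payoff from
   investing t in CPR j is g(t) = t^{a_i} F_ij(t + s), and
   g'(t) = t^{a_i - 1} psi_ij(t; s).  At an equilibrium every invested CPR
   carries a total load below omega_ij (otherwise halving the investment would
   turn a zero payoff into a positive one), so psi_ij(x_ij; s) >= 0 because
   x_ij maximises g from the left, with equality when the budget is slack.
   A Type I player invests in every CPR of A(x_{-i}), since a small investment
   in an unused one would pay.  As psi_ij(u; s) strictly decreases in u and in
   the total u + s, the inequality x_T <= y_T shows that a CPR player i uses in
   y is available, hence used, in x, with y_ij <= x_ij; so the budget of i is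
   still slack in y and its first-order conditions make it Type I there. *)

Lemma sumr_dfwith (I : finType) (T : Type) (V : zmodType) (F : I -> T -> V)
    (w : I -> T) i t :
  \sum_k F k (dfwith w i t k) = \sum_k F k (w k) - F i (w i) + F i t.
Proof.
rewrite (bigD1 i) //= [in RHS](bigD1 i) //= dfwithin.
under eq_bigr => k ki do rewrite dfwithout 1?eq_sym //.
by rewrite addrC [X in _ = X + _]addrC addKr.
Qed.

Lemma derive_ge0_at_left_max (R : realFieldType) (f : R -> R) (a c : R) :
  a < c -> derivable f c 1 -> (forall t, a < t < c -> f t <= f c) ->
  0 <= 'D_1 f c.
Proof.
move=> ac fdrvbl cmax.
rewrite ['D_1 f c]cvg_at_leftE; last exact: fdrvbl.
apply: limr_ge.
  rewrite -(cvg_at_leftE (fun h => h^-1 *: ((f \o shift c) _ - f c))) //.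
  apply: cvg_trans fdrvbl; apply: cvg_app.
  move=> A [e egt0 Ae]; exists e => // x xe xgt0; apply: Ae => //.
  exact/ltr0_neq0.
near=> h; apply: mulr_le0.
  by rewrite invr_le0; apply: ltW; near: h; exists 1 => /=.
rewrite subr_le0 [_%:A]mulr1; apply: cmax; near: h.
exists (c - a); first by rewrite /= subr_gt0.
move=> h; rewrite /= distrC subr0 => /ltr_normlP [] h1 h2 h0.
apply/andP; split; lra.
Unshelve. all: by end_near. Qed.

Section Game.
Variables (R : realType) (n m : nat) (G : game R n m).
Hypothesis HG : game_assumptions G.

Lemma xT_xTm (x : profile R n m) i j : xT x j = x i j + xTm x i j.
Proof. by rewrite /xT (bigD1 i). Qed.

Lemma xTm_ge0 (x : profile R n m) i j : inCn x -> 0 <= xTm x i j.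
Proof.
by move=> Hx; apply: sumr_ge0 => l _; case: (Hx l) => /(_ j) /andP[].
Qed.

Lemma aexp_gt0 i : 0 < aexp G i.
Proof. by case: HG => _ [_ [_ [_ [_ [_ [/(_ i) /andP[]]]]]]]. Qed.

Lemma Ffun_continuous i j : {within `[0, 1], continuous (Ffun G i j)}.
Proof. by case: HG => _ [_ [_ [_ [_ [_ [_ [_ [H _]]]]]]]]. Qed.

Lemma Ffun_derivable i j t : 0 < t < 1 -> derivable (Ffun G i j) t 1.
Proof. by case: HG => _ [_ [_ [_ [_ [_ [_ [_ [_ [H _]]]]]]]]] /(H i j) []. Qed.

Lemma derive1_Ffun_lt0 i j t : 0 < t < 1 -> derive1 (Ffun G i j) t < 0.
Proof.
by case: HG => _ [_ [_ [_ [_ [_ [_ [_ [_ [H _]]]]]]]]] /(H i j) [_ []].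
Qed.

Lemma derive1_Ffun_derivable i j t : 0 < t < 1 ->
  derivable (derive1 (Ffun G i j)) t 1.
Proof.
by case: HG => _ [_ [_ [_ [_ [_ [_ [_ [_ [H _]]]]]]]]] /(H i j) [_ [_ []]].
Qed.

Lemma derive2_Ffun_lt0 i j t : 0 < t < 1 ->
  derive1 (derive1 (Ffun G i j)) t < 0.
Proof.
by case: HG => _ [_ [_ [_ [_ [_ [_ [_ [_ [H _]]]]]]]]] /(H i j) [_ [_ []]].
Qed.

Lemma omega_in01 i j : 0 < omega G i j < 1.
Proof. by case: HG => _ [_ [_ [_ [_ [_ [_ [_ [_ [_ /(_ i j) []]]]]]]]]]. Qed.

Lemma Ffun_omega i j : Ffun G i j (omega G i j) = 0.
Proof. by case: HG => _ [_ [_ [_ [_ [_ [_ [_ [_ [_ /(_ i j) []]]]]]]]]]. Qed.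

Lemma Ffun_decr i j u v : 0 <= u -> u < v -> v <= 1 ->
  Ffun G i j v < Ffun G i j u.
Proof.
apply: (@ltr0_derive1_decr _ _ 0 1); last exact: Ffun_continuous.
- by move=> t; rewrite in_itv /=; apply: Ffun_derivable.
- by move=> t; rewrite in_itv /=; apply: derive1_Ffun_lt0.
Qed.

Lemma Ffun_gt0 i j t : 0 <= t < omega G i j -> 0 < Ffun G i j t.
Proof.
move=> /andP[t0 tw]; rewrite -(Ffun_omega i j) Ffun_decr //.
by have /andP[_ /ltW] := omega_in01 i j.
Qed.

Lemma derive1_Ffun_nonincr i j u v : 0 < u -> u <= v -> v < 1 ->
  derive1 (Ffun G i j) v <= derive1 (Ffun G i j) u.
Proof.
move=> u0; rewrite le_eqVlt => /predU1P[-> //|uv] v1.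
have uv01 t : u <= t <= v -> 0 < t < 1.
  by move=> /andP[ut tv]; rewrite (lt_le_trans u0 ut) (le_lt_trans tv v1).
apply/ltW/(@ltr0_derive1_decr _ _ u v) => //.
- move=> t; rewrite in_itv /= => /andP[/ltW ? /ltW ?].
  by apply/derive1_Ffun_derivable/uv01/andP.
- move=> t; rewrite in_itv /= => /andP[/ltW ? /ltW ?].
  by apply/derive2_Ffun_lt0/uv01/andP.
apply: derivable_within_continuous => t; rewrite in_itv /= => /uv01.
exact: derive1_Ffun_derivable.
Qed.

Definition payoff i j (s t : R) : R := t `^ aexp G i * Ffun G i j (t + s).

Lemma Vutil_payoff i z x : Vutil G i z x = \sum_j payoff i j (xTm x i j) (z j).
Proof. by []. Qed.

Lemma payoff0 i j s : payoff i j s 0 = 0.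
Proof. by rewrite /payoff powR0 ?mul0r // gt_eqF // aexp_gt0. Qed.

Lemma payoff_gt0 i j s t : 0 < t -> 0 <= t + s < omega G i j ->
  0 < payoff i j s t.
Proof. by move=> t0 ts; rewrite mulr_gt0 ?powR_gt0 ?Ffun_gt0. Qed.

Lemma is_derive_payoff i j (s t : R) : 0 < t -> 0 < t + s < 1 ->
  is_derive t 1 (payoff i j s) (t `^ (aexp G i - 1) * psi G i j t s).
Proof.
move=> t0 ts01.
pose P := fun u : R => u `^ aexp G i.
pose Fs := Ffun G i j \o shift s.
have -> : payoff i j s = P * Fs by apply/funext.
have dP : derivable P t 1 by apply: derivable_powR; rewrite in_itv /= t0.
have [dFs DFs] : is_derive t 1 Fs ('D_1 (Ffun G i j) (t + s) * 1).
  apply: is_derive1_comp; last exact: is_derive_shift.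
  exact/derivableP/Ffun_derivable.
apply: DeriveDef; first exact: derivableM.
rewrite deriveM // DFs -derive1E -[X in _ + _ *: X]derive1E.
rewrite /P powR_derive1 ?in_itv /= ?t0 // /psi /Fs /=.
rewrite -(mulr_powRB1 (ltW t0) (aexp_gt0 i)) /GRing.scale /=.
ring.
Qed.

Lemma psi_decr i j u1 u2 s1 s2 : 0 < u1 -> u1 < u2 -> 0 <= s1 ->
  u1 + s1 <= u2 + s2 -> u2 + s2 < 1 -> psi G i j u2 s2 < psi G i j u1 s1.
Proof.
move=> u10 u12 s10 le12 lt21.
have dF := @derive1_Ffun_nonincr i j (u1 + s1) (u2 + s2) ltac:(lra) le12 lt21.
have dF2 : derive1 (Ffun G i j) (u2 + s2) < 0.
  by apply: derive1_Ffun_lt0; apply/andP; split; lra.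
have F12 : Ffun G i j (u2 + s2) <= Ffun G i j (u1 + s1).
  move: le12; rewrite le_eqVlt => /predU1P[-> //|lt12].
  by apply/ltW/Ffun_decr; lra.
have a0 := aexp_gt0 i.
rewrite /psi; nra.
Qed.

Lemma vartheta_dfwith x i j (t : R) : vartheta G x i (x i) -> Aset G x i j ->
  0 <= t <= omega G i j - xTm x i j -> t <= 1 ->
  \sum_k x i k - x i j + t <= 1 -> vartheta G x i (dfwith (x i) j t).
Proof.
move=> [[x01 _] HA] Aj /andP[t0 tw] t1 budget; split; first split.
- by move=> k; case: dfwithP => [|{}k _]; [rewrite t0 t1 | apply: x01].
- by rewrite (sumr_dfwith (fun=> id)).
move=> k; case: dfwithP => [|{}k _]; last exact: HA.
by split=> [_|]; [rewrite t0 tw | rewrite Aj].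
Qed.

Lemma sum_Jset x i : vartheta G x i (x i) ->
  \sum_(j | Jset G x i j) x i j = \sum_j x i j.
Proof.
move=> [_ HA]; rewrite big_mkcond; apply: eq_bigr => j _.
by case: ifP => // /negbT; rewrite negb_and => /orP[/(HA j).2|/negPn/eqP].
Qed.

Section Equilibrium.
Variable x : profile R n m.
Hypothesis Hx : GNE G x.

Lemma GNE_vartheta i : vartheta G x i (x i).
Proof. exact: (Hx.2 i).1. Qed.

Lemma GNE_coord01 i j : 0 <= x i j <= 1.
Proof. by case: (Hx.1 i) => /(_ j). Qed.

Lemma GNE_budget01 i : 0 <= \sum_k x i k <= 1.
Proof.
case: (Hx.1 i) => x01 ->; rewrite andbT.
by apply: sumr_ge0 => k _; case/andP: (x01 k).
Qed.

Lemma GNE_best_response i j t : Aset G x i j ->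
  0 <= t <= omega G i j - xTm x i j -> \sum_k x i k - x i j + t <= 1 ->
  payoff i j (xTm x i j) t <= payoff i j (xTm x i j) (x i j).
Proof.
move=> Aj tA budget.
have t1 : t <= 1.
  have := xTm_ge0 i j Hx.1; have := omega_in01 i j; case/andP: tA; lra.
have [xi_feas xi_opt] := Hx.2 i.
have := xi_opt _ (vartheta_dfwith xi_feas Aj tA t1 budget).
by rewrite !Vutil_payoff (sumr_dfwith (fun k => payoff i k (xTm x i k))); lra.
Qed.

Lemma GNE_load_lt_omega i j : Aset G x i j -> 0 < x i j ->
  x i j + xTm x i j < omega G i j.
Proof.
move=> Aj xij0; rewrite ltNge; apply/negP => wle.
have /andP[_ xw] := ((GNE_vartheta i).2 j).1 Aj.
have load : x i j + xTm x i j = omega G i j by apply/le_anti; rewrite wle; lra.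
have := xTm_ge0 i j Hx.1; have := GNE_budget01 i => /andP[_ budget] s0.
have half_feasible : 0 <= x i j / 2 <= omega G i j - xTm x i j.
  by apply/andP; split; lra.
have := GNE_best_response Aj half_feasible ltac:(lra).
rewrite /payoff load Ffun_omega mulr0 leNgt => /negP; apply.
by apply: payoff_gt0; lra.
Qed.

Lemma GNE_load01 i j : Aset G x i j -> 0 < x i j -> 0 < x i j + xTm x i j < 1.
Proof.
move=> Aj xij0; have := GNE_load_lt_omega Aj xij0.
have := omega_in01 i j; have := xTm_ge0 i j Hx.1; lra.
Qed.

Lemma GNE_psi_ge0 i j : Aset G x i j -> 0 < x i j ->
  0 <= psi G i j (x i j) (xTm x i j).
Proof.
move=> Aj xij0; have [dg Dg] := is_derive_payoff i j xij0 (GNE_load01 Aj xij0).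
have /andP[_ budget] := GNE_budget01 i.
have /andP[_ xw] := ((GNE_vartheta i).2 j).1 Aj.
have := derive_ge0_at_left_max xij0 dg.
rewrite Dg pmulr_rge0 ?powR_gt0 //; apply => t /andP[t0 tx].
by apply: GNE_best_response => //; lra.
Qed.

Lemma GNE_local_max i j : Aset G x i j -> \sum_k x i k < 1 ->
  x i j + xTm x i j < omega G i j ->
  exists2 d, 0 < d /\ x i j + d + xTm x i j < omega G i j &
    forall t, 0 <= t <= x i j + d ->
      payoff i j (xTm x i j) t <= payoff i j (xTm x i j) (x i j).
Proof.
move=> Aj budget load.
have s0 := xTm_ge0 i j Hx.1; have /andP[x0 _] := GNE_coord01 i j.
have /andP[budget0 _] := GNE_budget01 i; have /andP[_ w1] := omega_in01 i j.
pose d := (omega G i j - xTm x i j - x i j) * (1 - \sum_k x i k) / 2.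
have d0 : 0 < d by rewrite !mulr_gt0 //; lra.
have dw : d < omega G i j - xTm x i j - x i j by rewrite /d; nra.
have dbudget : d <= 1 - \sum_k x i k by rewrite /d; nra.
exists d; first by split; lra.
by move=> t /andP[t0 tx]; apply: GNE_best_response => //; lra.
Qed.

Lemma GNE_psi_eq0 i j : Aset G x i j -> 0 < x i j -> \sum_k x i k < 1 ->
  psi G i j (x i j) (xTm x i j) = 0.
Proof.
move=> Aj xij0 budget.
have [d [d0 dw] xmax] := GNE_local_max Aj budget (GNE_load_lt_omega Aj xij0).
have s0 := xTm_ge0 i j Hx.1; have /andP[_ w1] := omega_in01 i j.
have [_ Dg] := is_derive_payoff i j xij0 (GNE_load01 Aj xij0).
have xin : x i j \in `]0, x i j + d[.
  by rewrite in_itv /=; apply/andP; split; lra.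
have [_] : is_derive (x i j) 1 (payoff i j (xTm x i j)) 0.
  apply: (@derive1_at_max _ _ 0 (x i j + d)) xin _ => [|t|t];
    rewrite ?in_itv /=.
  - lra.
  - move=> /andP[t0 tx].
    have ts01 : 0 < t + xTm x i j < 1 by apply/andP; split; lra.
    by case: (is_derive_payoff i j t0 ts01).
  - by move=> /andP[t0 tx]; apply: xmax; lra.
by rewrite Dg => /eqP; rewrite mulf_eq0 gt_eqF ?powR_gt0 // => /eqP.
Qed.

Lemma GNE_typeI_Aset_neq0 i j : typeI G x i -> Aset G x i j -> x i j != 0.
Proof.
move=> [budget _] Aj; apply/negP => /eqP xij0.
rewrite (sum_Jset (GNE_vartheta i)) in budget.
have [d [d0 dw] dmax] := GNE_local_max Aj budget ltac:(rewrite xij0 add0r //).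
have dmax_d : payoff i j (xTm x i j) d <= 0.
  rewrite -(payoff0 i j (xTm x i j)) -xij0.
  by apply: dmax; rewrite xij0 add0r lexx ltW.
have : 0 < payoff i j (xTm x i j) d.
  apply: payoff_gt0 => //; move: dw; rewrite xij0 add0r.
  by have := xTm_ge0 i j Hx.1; lra.
by rewrite ltNge dmax_d.
Qed.

Lemma GNE_Jset_gt0 i j : Jset G x i j -> 0 < x i j.
Proof.
by move=> /andP[_ xij0]; rewrite lt_def xij0; case/andP: (GNE_coord01 i j).
Qed.

End Equilibrium.

Section Comparison.
Variables x y : profile R n m.
Hypotheses (Hx : GNE G x) (Hy : GNE G y) (Hxy : forall j, xT x j <= xT y j).

Lemma typeI_Jset_sub i j : typeI G x i -> Jset G y i j -> Jset G x i j.
Proof.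
move=> TIx Jy; have yij0 := GNE_Jset_gt0 Hy Jy; have /andP[Ay _] := Jy.
suff Ax : Aset G x i j by rewrite /Jset Ax GNE_typeI_Aset_neq0.
rewrite /Aset ltNge; apply/negP => wx.
have xij0 : x i j = 0.
  by apply: ((GNE_vartheta Hx i).2 j).2; rewrite /Aset -leNgt.
have := Hxy j; rewrite (xT_xTm x i) (xT_xTm y i) xij0.
by have := GNE_load_lt_omega Hy Ay yij0; lra.
Qed.

Lemma typeI_Jset_le i j : typeI G x i -> Jset G y i j -> y i j <= x i j.
Proof.
move=> TIx Jy; have Jx := typeI_Jset_sub TIx Jy.
have yij0 := GNE_Jset_gt0 Hy Jy; have xij0 := GNE_Jset_gt0 Hx Jx.
have /andP[Ay _] := Jy; have /andP[_ load_y1] := GNE_load01 Hy Ay yij0.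
have load_xy : x i j + xTm x i j <= y i j + xTm y i j by rewrite -!xT_xTm.
rewrite leNgt; apply/negP => xy.
have := psi_decr i j xij0 xy (xTm_ge0 i j Hx.1) load_xy load_y1.
by rewrite (TIx.2 j Jx) ltNge GNE_psi_ge0.
Qed.

Lemma typeI_mono i : typeI G x i -> typeI G y i.
Proof.
move=> TIx; have [budget_x _] := TIx.
rewrite (sum_Jset (GNE_vartheta Hx i)) in budget_x.
have budget_y : \sum_(j | Jset G y i j) y i j < 1.
  apply: le_lt_trans budget_x.
  apply: (@le_trans _ _ (\sum_(j | Jset G y i j) x i j)).
    by apply: ler_sum => j /(typeI_Jset_le TIx).
  rewrite big_mkcond; apply: ler_sum => j _.
  by case: ifP => // _; case/andP: (GNE_coord01 Hx i j).
split=> // j Jy; have /andP[Ay _] := Jy.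
apply: (GNE_psi_eq0 Hy Ay (GNE_Jset_gt0 Hy Jy)).
by rewrite -(sum_Jset (GNE_vartheta Hy i)).
Qed.

End Comparison.
End Game.

Theorem lemma6 (R : realType) (n m : nat) (G : game R n m) (x y : profile R n m) :
  game_assumptions G ->
  GNE G x -> GNE G y ->
  (forall j, xT x j <= xT y j) ->
  (forall i, TI G x i -> forall j, Jset G y i j -> Jset G x i j) /\
  TI G x `<=` TI G y.
Proof.
move=> HG Hx Hy Hxy; split=> i TIx.
- by move=> j; apply: (typeI_Jset_sub HG Hx Hy Hxy).
- exact: (typeI_mono HG Hx Hy Hxy).
Qed.
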